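(* The average-cost relative value function $V$ (the limit $\lim_{\alpha\uparrow1}(V_\alpha - V_\alpha(0))$ solving the average-cost dynamic programming equation with $V(0)=0$) is increasing in its argument: $y>z$ implies $V(z)\le V(y)$.
   Context: Single-server problem: Bernoulli($p$) arrivals, queue $X_{t+1}=X_t-D_{t+1}+\nu_t\xi_{t+1}$ on $\mathcal N=\{0,1,\dots\}$, $\nu_t\in\{0,1\}$ (1 active, 0 passive), $D_{t+1}\sim\mathrm{Binomial}(x,q/x)$ given $X_t=x\ge1$, no departures at $x=0$; $C>0$, $1>q>2p>0$, $\lambda\in\mathbb R$, cost $c(x,\nu)=Cx+(1-\nu)\lambda$. For $0<\alpha<1$, $V_\alpha(x)$ is the optimal $\alpha$-discounted cost from $x$ over admissible controls. The average-cost DP equation is $V(x)=Cx-\beta+\min\big(\mathbb{E}_x[pV(x-D+1)+(1-p)V(x-D)],\ \lambda+\mathbb{E}_x[V(x-D)]\big)$ where $\mathbb{E}_x$ is over $D\sim\mathrm{Binomial}(x,q/x)$. *)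

From Stdlib Require Import Reals List Lra.
Open Scope R_scope.

(* P(D = k) for D ~ Binomial(x, q/x).  For x = 0 this is the point mass at 0
   (C 0 0 * r^0 * (1-r)^0 = 1), matching "no departures at x = 0". *)
Definition dprob (q : R) (x k : nat) : R :=
  C x k * (q / INR x) ^ k * (1 - q / INR x) ^ (x - k).

Definition Edep (q : R) (x : nat) (f : nat -> R) : R :=
  sum_f_R0 (fun k => dprob q x k * f (x - k)%nat) x.

(* one-stage cost c(x,nu) = C x + (1 - nu) lambda ; nu = true means active (1) *)
Definition cost (Cc lam : R) (x : nat) (nu : bool) : R :=
  Cc * INR x + (if nu then 0 else lam).

(* An admissible (deterministic, history-dependent) control: maps the history
   of visited states (most recent first; the head is the current state; its
   length encodes time) to an action (true = active, nu = 1). *)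
Definition policy := list nat -> bool.

Fixpoint Jn (Cc p q lam alpha : R) (pi : policy) (n : nat) (h : list nat) : R :=
  match n with
  | O => 0
  | S m =>
    let x := hd O h in
    cost Cc lam x (pi h) + alpha *
      (if pi h
       then Edep q x (fun y => p * Jn Cc p q lam alpha pi m ((y + 1)%nat :: h)
                               + (1 - p) * Jn Cc p q lam alpha pi m (y :: h))
       else Edep q x (fun y => Jn Cc p q lam alpha pi m (y :: h)))
  end.

Definition disc_cost (Cc p q lam alpha : R) (pi : policy) (x : nat) (J : R) : Prop :=
  Un_cv (fun n => Jn Cc p q lam alpha pi n (x :: nil)) J.

Definition is_inf (E : R -> Prop) (m : R) : Prop :=
  (forall y, E y -> m <= y) /\ (forall b, (forall y, E y -> b <= y) -> b <= m).

Definition is_Valpha (Cc p q lam alpha : R) (x : nat) (v : R) : Prop :=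
  is_inf (fun J => exists pi : policy, disc_cost Cc p q lam alpha pi x J) v.

(* For each discount factor, V_alpha is nondecreasing in the queue length, and V
   inherits this as the limit of V_alpha - V_alpha(0).  Value iteration W_N is
   nondecreasing in the state because E_x[f(x - D)] grows with x for nondecreasing f:
   lowering the departure probability from q/x to q/(x+1) and then adding a customer
   both leave more customers behind.  W_N approximates V_alpha up to the discounted
   tail alpha^N * O(x + N): the policy acting greedily against W_N attains W_N over the
   first N stages, and no policy pays less than W_N over them. *)

From Stdlib Require Import Reals Lra Lia List.
Open Scope R_scope.

Lemma pow_between_0_1 a n : 0 <= a <= 1 -> 0 <= a ^ n <= 1.
Proof. intros Ha. split; [apply pow_le; lra|rewrite <- (pow1 n); apply pow_incr; lra]. Qed.

Lemma pow_Bernoulli_le a n : 0 <= a <= 1 -> a ^ n * (1 + INR n * (1 - a)) <= 1.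
Proof.
  intros Ha. induction n as [|n IH]; [simpl; lra|].
  rewrite S_INR. simpl pow.
  assert (0 <= a ^ n <= 1) by (apply pow_between_0_1; lra).
  assert (a * (a ^ n * (1 + INR n * (1 - a))) <= a * 1) by (apply Rmult_le_compat_l; lra).
  assert (a * a ^ n * (1 - a) <= 1 * (1 - a)) by (apply Rmult_le_compat_r; nra).
  nra.
Qed.

Lemma pow_affine_small a b c eps : 0 < a < 1 -> 0 <= b -> 0 <= c -> 0 < eps ->
  exists N, a ^ N * (b + c * INR N) < eps.
Proof.
  intros Ha Hb Hc Heps.
  set (M := b + 2 * c / (1 - a)).
  assert (HM : 0 <= M) by (unfold M, Rdiv; pose proof (Rle_mult_inv_pos (2 * c) (1 - a)); nra).
  destruct (pow_lt_1_zero a ltac:(rewrite Rabs_pos_eq; lra) (eps / (M + 1)))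
    as [K HK]; [apply Rdiv_lt_0_compat; lra|].
  specialize (HK K (le_n K)). rewrite Rabs_pos_eq in HK by (apply pow_le; lra).
  assert (HKM : a ^ K * M < eps).
  { apply Rle_lt_trans with (eps / (M + 1) * M); [apply Rmult_le_compat_r; lra|].
    replace (eps / (M + 1) * M) with (eps - eps / (M + 1)) by (field; lra).
    pose proof (Rdiv_lt_0_compat eps (M + 1) Heps ltac:(lra)). lra. }
  (* The choice [N = 2K] splits [a ^ N * N] as [a ^ K * (a ^ K * 2K)] with a bounded second factor. *)
  exists (K + K)%nat. rewrite pow_add, plus_INR.
  assert (HaK : 0 <= a ^ K <= 1) by (apply pow_between_0_1; lra).
  assert (Hbern := pow_Bernoulli_le a K ltac:(lra)).
  assert (HKK : a ^ K * (INR K + INR K) <= 2 / (1 - a)).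
  { apply Rmult_le_reg_r with (1 - a); [lra|].
    replace (2 / (1 - a) * (1 - a)) with 2 by (field; lra). nra. }
  apply Rle_lt_trans with (a ^ K * M); [|exact HKM].
  assert (a ^ K * b <= 1 * b) by (apply Rmult_le_compat_r; lra).
  assert (c * (a ^ K * (INR K + INR K)) <= c * (2 / (1 - a))) by (apply Rmult_le_compat_l; lra).
  unfold M. replace (2 * c / (1 - a)) with (c * (2 / (1 - a))) by (field; lra).
  replace (a ^ K * a ^ K * (b + c * (INR K + INR K)))
    with (a ^ K * (a ^ K * b + c * (a ^ K * (INR K + INR K)))) by ring.
  apply Rmult_le_compat_l; lra.
Qed.

Lemma Cauchy_crit_tail (u t : nat -> R) :
  (forall N m, Rabs (u (N + m)%nat - u N) <= t N) ->
  (forall eps, 0 < eps -> exists N, t N < eps) -> Cauchy_crit u.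
Proof.
  intros Hu Ht eps Heps. destruct (Ht (eps / 2)) as [N HN]; [lra|].
  exists N. intros n m Hn Hm. unfold Rdist.
  pose proof (Hu N (n - N)%nat) as Hn'. pose proof (Hu N (m - N)%nat) as Hm'.
  replace (N + (n - N))%nat with n in Hn' by lia.
  replace (N + (m - N))%nat with m in Hm' by lia.
  replace (u n - u m) with ((u n - u N) - (u m - u N)) by ring.
  eapply Rle_lt_trans; [apply Rabs_triang|]. rewrite Rabs_Ropp. lra.
Qed.

Lemma cv_abs_sub_le (u : nat -> R) l N e :
  Un_cv u l -> (forall m, Rabs (u (N + m)%nat - u N) <= e) -> Rabs (l - u N) <= e.
Proof.
  intros Hu Hb. apply Rnot_lt_le. intros Hlt.
  destruct (Hu (Rabs (l - u N) - e)) as [M HM]; [lra|].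
  specialize (HM (N + M)%nat ltac:(lia)). specialize (Hb M). unfold Rdist in HM.
  rewrite Rabs_minus_sym in HM.
  pose proof (Rabs_triang (l - u (N + M)%nat) (u (N + M)%nat - u N)).
  replace (l - u (N + M)%nat + (u (N + M)%nat - u N)) with (l - u N) in H by ring. lra.
Qed.

Definition binom_mean (r : R) (n : nat) (f : nat -> R) : R :=
  sum_f_R0 (fun k => C n k * r ^ k * (1 - r) ^ (n - k) * f (n - k)%nat) n.

Lemma Edep_binom_mean q x f : Edep q x f = binom_mean (q / INR x) x f.
Proof. reflexivity. Qed.

Lemma C_n_0 n : C n 0 = 1.
Proof. unfold C. rewrite Nat.sub_0_r. simpl. field. apply INR_fact_neq_0. Qed.

Lemma C_n_n n : C n n = 1.
Proof. unfold C. rewrite Nat.sub_diag. simpl. field. apply INR_fact_neq_0. Qed.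

Lemma binom_mean_0 r f : binom_mean r 0 f = f 0%nat.
Proof. unfold binom_mean. simpl. rewrite C_n_0. ring. Qed.

(* Condition on whether the first of the [n+1] customers departs. *)
Lemma binom_mean_S r n f :
  binom_mean r (S n) f = r * binom_mean r n f + (1 - r) * binom_mean r n (fun j => f (S j)).
Proof.
  unfold binom_mean. set (s := 1 - r); clearbody s.
  set (a := fun i => C n i * r ^ S i * s ^ (n - i) * f (n - i)%nat).
  set (b := fun i => C n i * r ^ i * s ^ S (n - i) * f (S (n - i))).
  rewrite scal_sum, scal_sum.
  transitivity (sum_f_R0 a n + sum_f_R0 b n);
    [|f_equal; apply sum_eq; intros i _; unfold a, b; simpl; ring].
  destruct n as [|n].
  { simpl. unfold a, b. rewrite !C_n_0, !C_n_n. simpl. ring. }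
  rewrite decomp_sum by lia. simpl pred. rewrite tech5.
  rewrite tech5 with (An := a), decomp_sum with (An := b) by lia. simpl pred.
  assert (Hmid : sum_f_R0 (fun i => C (S (S n)) (S i) * r ^ S i * s ^ (S (S n) - S i)
                                      * f (S (S n) - S i)%nat) n
                 = sum_f_R0 a n + sum_f_R0 (fun i => b (S i)) n).
  { rewrite <- plus_sum. apply sum_eq. intros i Hi. unfold a, b.
    rewrite <- (pascal (S n) i) by lia.
    replace (S (S n) - S i)%nat with (S (S n - S i)) by lia.
    replace (S n - i)%nat with (S (S n - S i)) by lia. simpl. ring. }
  assert (Hfirst : C (S (S n)) 0 * r ^ 0 * s ^ (S (S n) - 0) * f (S (S n) - 0)%nat = b 0%nat).
  { unfold b. rewrite !C_n_0. simpl. ring. }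
  assert (Hlast : C (S (S n)) (S (S n)) * r ^ S (S n) * s ^ (S (S n) - S (S n))
                  * f (S (S n) - S (S n))%nat = a (S n)).
  { unfold a. rewrite !Nat.sub_diag, !C_n_n. simpl. ring. }
  rewrite Hmid, Hfirst, Hlast. ring.
Qed.

Section BinomialMeanOrder.

Variable r : R.
Hypothesis hr : 0 <= r <= 1.

Lemma binom_mean_le_compat n f g :
  (forall y, (y <= n)%nat -> f y <= g y) -> binom_mean r n f <= binom_mean r n g.
Proof.
  revert f g. induction n as [|n IH]; intros f g Hfg.
  - rewrite !binom_mean_0. apply Hfg. lia.
  - rewrite !binom_mean_S. apply Rplus_le_compat; apply Rmult_le_compat_l; try lra;
      apply IH; intros; apply Hfg; lia.
Qed.

Lemma binom_mean_abs_le n f M :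
  (forall y, (y <= n)%nat -> Rabs (f y) <= M) -> Rabs (binom_mean r n f) <= M.
Proof.
  revert f. induction n as [|n IH]; intros f Hf.
  - rewrite binom_mean_0. apply Hf. lia.
  - rewrite binom_mean_S.
    assert (H1 : Rabs (binom_mean r n f) <= M) by (apply IH; intros; apply Hf; lia).
    assert (H2 : Rabs (binom_mean r n (fun j => f (S j))) <= M)
      by (apply IH; intros; apply Hf; lia).
    revert H1 H2. generalize (binom_mean r n f) (binom_mean r n (fun j => f (S j))).
    intros u v Hu Hv. eapply Rle_trans; [apply Rabs_triang|].
    rewrite !Rabs_mult, (Rabs_pos_eq r), (Rabs_pos_eq (1 - r)) by lra. nra.
Qed.

Lemma binom_mean_growing_shift n f :
  Un_growing f -> binom_mean r n f <= binom_mean r n (fun j => f (S j)).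
Proof. intros Hf. apply binom_mean_le_compat. intros y _. apply Hf. Qed.

Lemma binom_mean_growing_S n f :
  Un_growing f -> binom_mean r n f <= binom_mean r (S n) f.
Proof.
  intros Hf. rewrite binom_mean_S. pose proof (binom_mean_growing_shift n f Hf). nra.
Qed.

End BinomialMeanOrder.

Lemma binom_mean_prob_antitone r r' n f :
  0 <= r' <= r -> r <= 1 -> Un_growing f -> binom_mean r n f <= binom_mean r' n f.
Proof.
  intros Hr' Hr. revert f. induction n as [|n IH]; intros f Hf.
  - rewrite !binom_mean_0. lra.
  - rewrite !binom_mean_S.
    assert (A := IH f Hf).
    assert (B := IH (fun j => f (S j)) (fun y => Hf (S y))).
    assert (AB := binom_mean_growing_shift r' ltac:(lra) n f Hf).
    nra.
Qed.

Lemma Edep_prob_bounds q x : 0 <= q <= 1 -> 0 <= q / INR x <= 1.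
Proof.
  intros Hq. destruct x as [|x].
  - simpl. unfold Rdiv. rewrite Rinv_0. lra.
  - assert (Hx : 1 <= INR (S x)) by (rewrite S_INR; pose proof (pos_INR x); lra).
    unfold Rdiv. split; [apply Rle_mult_inv_pos; lra|].
    apply Rmult_le_reg_r with (INR (S x)); [lra|].
    rewrite Rmult_assoc, Rinv_l by lra. lra.
Qed.

Lemma Edep_ext q x f g : (forall y, f y = g y) -> Edep q x f = Edep q x g.
Proof. intros Hfg. apply sum_eq. intros k _. rewrite Hfg. reflexivity. Qed.

Lemma Edep_sub q x f g : Edep q x f - Edep q x g = Edep q x (fun y => f y - g y).
Proof. unfold Edep. rewrite <- minus_sum. apply sum_eq. intros. ring. Qed.

Section Departures.

Variable q : R.
Hypothesis hq : 0 <= q <= 1.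

Lemma Edep_le_compat x f g :
  (forall y, (y <= x)%nat -> f y <= g y) -> Edep q x f <= Edep q x g.
Proof. apply binom_mean_le_compat, Edep_prob_bounds, hq. Qed.

Lemma Edep_abs_le x f M :
  (forall y, (y <= x)%nat -> Rabs (f y) <= M) -> Rabs (Edep q x f) <= M.
Proof. apply binom_mean_abs_le, Edep_prob_bounds, hq. Qed.

(* Lower the departure probability from [q/x] to [q/(x+1)], then add a customer. *)
Lemma Edep_growing_state x f : Un_growing f -> Edep q x f <= Edep q (S x) f.
Proof.
  intros Hf. rewrite !Edep_binom_mean.
  assert (Hr := Edep_prob_bounds q (S x) hq).
  apply Rle_trans with (binom_mean (q / INR (S x)) x f);
    [|apply binom_mean_growing_S; auto].
  destruct x as [|x].
  - rewrite !binom_mean_0. lra.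
  - apply binom_mean_prob_antitone; auto; [|apply Edep_prob_bounds; auto].
    split; [lra|]. unfold Rdiv. apply Rmult_le_compat_l; [lra|].
    apply Rinv_le_contravar; rewrite ?S_INR; pose proof (pos_INR x); lra.
Qed.

End Departures.

Section Control.

Variables Cc p q lam alpha : R.
Hypothesis hC : 0 <= Cc.
Hypothesis hp : 0 <= p <= 1.
Hypothesis hq : 0 <= q <= 1.
Hypothesis halpha : 0 < alpha < 1.

Definition arrival_mean (g : nat -> R) (y : nat) : R := p * g (y + 1)%nat + (1 - p) * g y.

Definition stage_mean (a : bool) (g : nat -> R) (x : nat) : R :=
  if a then Edep q x (arrival_mean g) else Edep q x g.

Definition stage_value (g : nat -> R) (x : nat) (a : bool) : R :=
  cost Cc lam x a + alpha * stage_mean a g x.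

Lemma Jn_S pi n h :
  Jn Cc p q lam alpha pi (S n) h
  = stage_value (fun y => Jn Cc p q lam alpha pi n (y :: h)) (hd O h) (pi h).
Proof. reflexivity. Qed.

Lemma stage_mean_le_compat a g1 g2 x :
  (forall y, g1 y <= g2 y) -> stage_mean a g1 x <= stage_mean a g2 x.
Proof.
  intros Hg. destruct a; apply Edep_le_compat; try exact hq; intros y _.
  - unfold arrival_mean. pose proof (Hg (y + 1)%nat). pose proof (Hg y). nra.
  - apply Hg.
Qed.

Lemma stage_mean_abs_le a g x M :
  (forall y, (y <= S x)%nat -> Rabs (g y) <= M) -> Rabs (stage_mean a g x) <= M.
Proof.
  intros Hg. destruct a; apply Edep_abs_le; try exact hq; intros y Hy.
  2:{ apply Hg. lia. }
  unfold arrival_mean. eapply Rle_trans; [apply Rabs_triang|].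
  rewrite !Rabs_mult, (Rabs_pos_eq p), (Rabs_pos_eq (1 - p)) by lra.
  assert (Rabs (g (y + 1)%nat) <= M) by (apply Hg; lia).
  assert (Rabs (g y) <= M) by (apply Hg; lia). nra.
Qed.

Lemma stage_mean_growing a g : Un_growing g -> Un_growing (stage_mean a g).
Proof.
  intros Hg x. destruct a; apply Edep_growing_state; auto.
  intros y. unfold arrival_mean. replace (S y + 1)%nat with (S (y + 1)) by lia.
  pose proof (Hg y). pose proof (Hg (y + 1)%nat). nra.
Qed.

Lemma stage_value_sub g1 g2 x a :
  stage_value g1 x a - stage_value g2 x a
  = alpha * stage_mean a (fun y => g1 y - g2 y) x.
Proof.
  unfold stage_value.
  transitivity (alpha * (stage_mean a g1 x - stage_mean a g2 x)); [ring|f_equal].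
  unfold stage_mean. destruct a; rewrite Edep_sub; [|reflexivity].
  apply Edep_ext. intros y. unfold arrival_mean. ring.
Qed.

Lemma cost_abs_le x a : Rabs (cost Cc lam x a) <= Cc * INR x + Rabs lam.
Proof.
  assert (0 <= Cc * INR x) by (apply Rmult_le_pos; [lra|apply pos_INR]).
  unfold cost. eapply Rle_trans; [apply Rabs_triang|].
  rewrite Rabs_pos_eq by lra. destruct a; [rewrite Rabs_R0; pose proof (Rabs_pos lam)|]; lra.
Qed.

(* [sum_k alpha^k (Cc (x + k) + |lam|)]: the queue grows by at most one customer per stage. *)
Definition cost_majorant (x : nat) : R :=
  (Cc * INR x + Rabs lam) / (1 - alpha) + Cc * alpha / (1 - alpha) ^ 2.

Lemma cost_majorant_S x :
  Cc * INR x + Rabs lam + alpha * cost_majorant (S x) = cost_majorant x.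
Proof. unfold cost_majorant. rewrite S_INR. field. lra. Qed.

Lemma cost_majorant_add x n :
  cost_majorant (x + n) = cost_majorant x + Cc / (1 - alpha) * INR n.
Proof. unfold cost_majorant. rewrite plus_INR. field. lra. Qed.

Lemma cost_majorant_nonneg x : 0 <= cost_majorant x.
Proof.
  unfold cost_majorant. pose proof (pos_INR x). pose proof (Rabs_pos lam).
  assert (0 < (1 - alpha) ^ 2) by (apply pow_lt; lra).
  unfold Rdiv. apply Rplus_le_le_0_compat; apply Rle_mult_inv_pos; try lra.
  - apply Rplus_le_le_0_compat; [apply Rmult_le_pos|]; lra.
  - apply Rmult_le_pos; lra.
Qed.

Lemma cost_majorant_le x y : (x <= y)%nat -> cost_majorant x <= cost_majorant y.
Proof.
  intros Hxy. replace y with (x + (y - x))%nat by lia. rewrite cost_majorant_add.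
  assert (0 <= Cc / (1 - alpha)) by (apply Rle_mult_inv_pos; lra).
  pose proof (pos_INR (y - x)). nra.
Qed.

Lemma Jn_abs_le pi n h : Rabs (Jn Cc p q lam alpha pi n h) <= cost_majorant (hd O h).
Proof.
  revert h. induction n as [|n IH]; intros h.
  - simpl. rewrite Rabs_R0. apply cost_majorant_nonneg.
  - rewrite Jn_S, <- cost_majorant_S. unfold stage_value.
    eapply Rle_trans; [apply Rabs_triang|]. apply Rplus_le_compat; [apply cost_abs_le|].
    rewrite Rabs_mult, Rabs_pos_eq by lra. apply Rmult_le_compat_l; [lra|].
    apply stage_mean_abs_le. intros y Hy.
    eapply Rle_trans; [apply (IH (y :: h))|]. apply cost_majorant_le. exact Hy.
Qed.

(* After [n] stages the queue holds at most [x + n] customers and every later cost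
   carries the factor [alpha ^ n]. *)
Lemma Jn_tail pi n m h x : (hd O h <= x)%nat ->
  Rabs (Jn Cc p q lam alpha pi (n + m) h - Jn Cc p q lam alpha pi n h)
  <= alpha ^ n * cost_majorant (x + n).
Proof.
  revert h x. induction n as [|n IH]; intros h x Hx.
  - simpl. rewrite Rminus_0_r, Rmult_1_l, Nat.add_0_r.
    eapply Rle_trans; [apply Jn_abs_le|]. apply cost_majorant_le. exact Hx.
  - rewrite Nat.add_succ_l, !Jn_S, stage_value_sub, Rabs_mult, Rabs_pos_eq by lra.
    simpl pow. rewrite Rmult_assoc. apply Rmult_le_compat_l; [lra|].
    apply stage_mean_abs_le. intros y Hy.
    replace (x + S n)%nat with (S x + n)%nat by lia. apply IH. simpl. lia.
Qed.

Fixpoint value_iter (n x : nat) : R :=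
  match n with
  | O => 0
  | S m => Rmin (stage_value (value_iter m) x true) (stage_value (value_iter m) x false)
  end.

Lemma value_iter_le_Jn pi n h :
  value_iter n (hd O h) <= Jn Cc p q lam alpha pi n h.
Proof.
  revert h. induction n as [|n IH]; intros h; [simpl; lra|].
  rewrite Jn_S. simpl value_iter.
  apply Rle_trans with (stage_value (value_iter n) (hd O h) (pi h));
    [destruct (pi h); [apply Rmin_l|apply Rmin_r]|].
  unfold stage_value. apply Rplus_le_compat_l, Rmult_le_compat_l; [lra|].
  apply stage_mean_le_compat. intros y. apply (IH (y :: h)).
Qed.

Lemma value_iter_growing n : Un_growing (value_iter n).
Proof.
  induction n as [|n IH]; intros x; simpl; [lra|].
  assert (Hstage : forall a, stage_value (value_iter n) x a <= stage_value (value_iter n) (S x) a).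
  { intros a. unfold stage_value, cost. rewrite S_INR.
    pose proof (stage_mean_growing a (value_iter n) IH x). nra. }
  eapply Rle_trans; [apply Rle_min_compat_r, Hstage|apply Rle_min_compat_l, Hstage].
Qed.

Definition greedy_action (g : nat -> R) (x : nat) : bool :=
  if Rle_dec (stage_value g x true) (stage_value g x false) then true else false.

Lemma stage_value_greedy g x :
  stage_value g x (greedy_action g x) = Rmin (stage_value g x true) (stage_value g x false).
Proof.
  unfold greedy_action. destruct (Rle_dec _ _).
  - rewrite Rmin_left; auto.
  - rewrite Rmin_right; lra.
Qed.

(* A history of length [l] is observed at stage [l - 1]; of an [N]-stage horizon,
   [N - l] stages remain after the current one. *)
Definition greedy_policy (N : nat) : policy :=
  fun h => greedy_action (value_iter (N - length h)) (hd O h).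

Lemma Jn_greedy_policy N k h : (k <= N)%nat -> length h = S (N - k) ->
  Jn Cc p q lam alpha (greedy_policy N) k h = value_iter k (hd O h).
Proof.
  revert h. induction k as [|k IH]; intros h Hk Hh; [reflexivity|].
  rewrite Jn_S. simpl value_iter.
  unfold greedy_policy at 2. replace (N - length h)%nat with k by lia.
  rewrite <- stage_value_greedy. unfold stage_value. do 2 f_equal.
  unfold stage_mean. destruct (greedy_action _ _); apply Edep_ext; intros y;
    unfold arrival_mean; rewrite ?IH by (simpl; lia); reflexivity.
Qed.

Lemma cost_majorant_tail_small x eps : 0 < eps ->
  exists N, alpha ^ N * cost_majorant (x + N) < eps.
Proof.
  intros Heps.
  destruct (pow_affine_small alpha (cost_majorant x) (Cc / (1 - alpha)) eps) as [N HN];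
    auto; [apply cost_majorant_nonneg|apply Rle_mult_inv_pos; lra|].
  exists N. rewrite cost_majorant_add. exact HN.
Qed.

Lemma disc_cost_exists pi x : exists J, disc_cost Cc p q lam alpha pi x J.
Proof.
  assert (Hc : Cauchy_crit (fun n => Jn Cc p q lam alpha pi n (x :: nil))).
  { apply Cauchy_crit_tail with (t := fun N => alpha ^ N * cost_majorant (x + N)).
    - intros N m. apply Jn_tail. simpl. lia.
    - intros eps. apply cost_majorant_tail_small. }
  destruct (R_complete _ Hc) as [J HJ]. exists J. exact HJ.
Qed.

Lemma disc_cost_near_Jn pi x J N : disc_cost Cc p q lam alpha pi x J ->
  Rabs (J - Jn Cc p q lam alpha pi N (x :: nil)) <= alpha ^ N * cost_majorant (x + N).
Proof.
  intros HJ. apply (cv_abs_sub_le (fun n => Jn Cc p q lam alpha pi n (x :: nil))); auto.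
  intros m. apply Jn_tail. simpl. lia.
Qed.

Lemma Valpha_le_value_iter x v N : is_Valpha Cc p q lam alpha x v ->
  v <= value_iter N x + alpha ^ N * cost_majorant (x + N).
Proof.
  intros [Hlow _]. destruct (disc_cost_exists (greedy_policy N) x) as [J HJ].
  pose proof (disc_cost_near_Jn _ _ _ N HJ) as Hnear.
  rewrite Jn_greedy_policy in Hnear by (simpl; lia).
  pose proof (Rle_abs (J - value_iter N x)).
  assert (v <= J) by (apply Hlow; exists (greedy_policy N); exact HJ).
  simpl in Hnear. lra.
Qed.

Lemma value_iter_le_Valpha x v N : is_Valpha Cc p q lam alpha x v ->
  value_iter N x - alpha ^ N * cost_majorant (x + N) <= v.
Proof.
  intros [_ Hgreatest]. apply Hgreatest. intros J [pi HJ].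
  pose proof (disc_cost_near_Jn _ _ _ N HJ) as Hnear.
  pose proof (value_iter_le_Jn pi N (x :: nil)).
  rewrite Rabs_minus_sym in Hnear. pose proof (Rle_abs (Jn Cc p q lam alpha pi N (x :: nil) - J)).
  simpl in *. lra.
Qed.

Lemma Valpha_le_compat z y vz vy : (z <= y)%nat ->
  is_Valpha Cc p q lam alpha z vz -> is_Valpha Cc p q lam alpha y vy -> vz <= vy.
Proof.
  intros Hzy Hz Hy. apply Rle_plus_epsilon. intros eps Heps.
  destruct (cost_majorant_tail_small y (eps / 2)) as [N HN]; [lra|].
  pose proof (Valpha_le_value_iter z vz N Hz).
  pose proof (value_iter_le_Valpha y vy N Hy).
  pose proof (tech9 _ (value_iter_growing N) z y Hzy).
  assert (alpha ^ N * cost_majorant (z + N) <= alpha ^ N * cost_majorant (y + N)).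
  { apply Rmult_le_compat_l; [apply pow_le; lra|apply cost_majorant_le; lia]. }
  lra.
Qed.

End Control.

Lemma left_limit_at_1_le (u v : R -> R) (a b : R) :
  (forall eps, 0 < eps -> exists delta, 0 < delta /\
     forall t, 1 - delta < t < 1 -> Rabs (u t - a) < eps) ->
  (forall eps, 0 < eps -> exists delta, 0 < delta /\
     forall t, 1 - delta < t < 1 -> Rabs (v t - b) < eps) ->
  (forall t, 0 < t < 1 -> u t <= v t) -> a <= b.
Proof.
  intros Hu Hv Huv. apply Rle_plus_epsilon. intros eps Heps.
  destruct (Hu (eps / 2)) as [du [Hdu Hu']]; [lra|].
  destruct (Hv (eps / 2)) as [dv [Hdv Hv']]; [lra|].
  set (d := Rmin 1 (Rmin du dv)).
  assert (Hd : 0 < d <= 1 /\ d <= du /\ d <= dv).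
  { unfold d. pose proof (Rmin_l 1 (Rmin du dv)). pose proof (Rmin_r 1 (Rmin du dv)).
    pose proof (Rmin_l du dv). pose proof (Rmin_r du dv).
    repeat split; try lra. apply Rmin_glb_lt; [lra|apply Rmin_glb_lt; lra]. }
  set (t := 1 - d / 2).
  specialize (Hu' t ltac:(unfold t; lra)). specialize (Hv' t ltac:(unfold t; lra)).
  apply Rabs_def2 in Hu'. apply Rabs_def2 in Hv'.
  pose proof (Huv t ltac:(unfold t; lra)). lra.
Qed.

Theorem lemma5 (Cc p q lam : R) (Valpha : R -> nat -> R) (V : nat -> R)
  (hC : 0 < Cc) (hp : 0 < p) (hpq : 2 * p < q) (hq : q < 1)
  (hVa : forall alpha x, 0 < alpha < 1 -> is_Valpha Cc p q lam alpha x (Valpha alpha x))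
  (hV : forall x eps, 0 < eps -> exists delta, 0 < delta /\
          forall alpha, 1 - delta < alpha < 1 ->
            Rabs (Valpha alpha x - Valpha alpha 0%nat - V x) < eps) :
  forall y z : nat, (y > z)%nat -> V z <= V y.
Proof.
  intros y z Hyz.
  apply (left_limit_at_1_le (fun a => Valpha a z - Valpha a 0%nat)
                            (fun a => Valpha a y - Valpha a 0%nat)); [apply hV|apply hV|].
  intros a Ha. apply Rplus_le_compat_r.
  apply (Valpha_le_compat Cc p q lam a) with z y; try lra; [lia|apply hVa..]; exact Ha.
Qed.
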